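(* Let $\rho>0$ and for an indexed family $\xi=(\xi_{l,m,n})_{(l,m,n)\in\mathbb{Z}_+^3\setminus\{\mathbf 0\}}$ define $\mathcal T\xi_{l,m,n}=\frac{n\rho}{2}\xi_{l+1,m+1,n-1}+\frac{l(l-1+2n)}{2}\xi_{l-1,m,n}+\frac{m(m-1+2n)}{2}\xi_{l,m-1,n}+\frac{n(n-1)}{2}\xi_{l,m,n-1}+lm\,\xi_{l-1,m-1,n+1}$, where terms with a negative index are zero. For any $R,K\in\mathbb{Z}_+$ and any $(l,m,n)$ of rank at most $R$ and class at most $K$, $\mathcal T\xi_{l,m,n}$ is a linear combination of entries $\xi_{l',m',n'}$ whose rank is at most $R$ and class at most $K$ (i.e. the span of moments of rank $\le R$ and class $\le K$ is closed under $\mathcal T$). Moreover the indices $(l+1,m+1,n-1)$ (recombination term) and $(l-1,m-1,n+1)$ (null coalescence term) have the same rank and class as $(l,m,n)$.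
   Context: The rank of $(l,m,n)\in\mathbb{Z}_+^3$ (equivalently of the moment $\mathbb{E}[x^l y^m x_1^n]$) is $l+m+2n$ and its class is $n+\min\{l,m\}$. *)

From mathcomp Require Import all_boot all_order all_algebra.
Set Implicit Arguments. Unset Strict Implicit. Unset Printing Implicit Defensive.
Import Order.TTheory GRing.Theory Num.Theory.

Definition idx := (nat * nat * nat)%type.

Definition rank (i : idx) : nat := let: (l, m, n) := i in (l + m + 2 * n)%N.
Definition cls (i : idx) : nat := let: (l, m, n) := i in (n + minn l m)%N.

Local Open Scope ring_scope.

(* A family xi indexed by Z_+^3 \ {0} is given as a function on idx whose
   value at (0,0,0) is ignored.  [xiget xi l m n] reads the entry at an
   integer index, returning 0 when some index is negative (convention of the
   paper) or the index is 0 (not part of the family). *)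
Definition xiget (R : ringType) (xi : idx -> R) (l m n : int) : R :=
  if [&& (0 <= l), (0 <= m), (0 <= n) & ~~ [&& l == 0, m == 0 & n == 0]]
  then xi (absz l, absz m, absz n) else 0.

Definition Top (R : fieldType) (rho : R) (xi : idx -> R) (i : idx) : R :=
  let: (l, m, n) := i in
  let lz := (l : int) in let mz := (m : int) in let nz := (n : int) in
    n%:R * rho / 2%:R * xiget xi (lz + 1) (mz + 1) (nz - 1)
  + l%:R * (l%:R - 1 + 2%:R * n%:R) / 2%:R * xiget xi (lz - 1) mz nz
  + m%:R * (m%:R - 1 + 2%:R * n%:R) / 2%:R * xiget xi lz (mz - 1) nz
  + n%:R * (n%:R - 1) / 2%:R * xiget xi lz mz (nz - 1)
  + l%:R * m%:R * xiget xi (lz - 1) (mz - 1) (nz + 1).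

From mathcomp Require Import all_boot all_order all_algebra.
From mathcomp Require Import zify.
Set Implicit Arguments. Unset Strict Implicit. Unset Printing Implicit Defensive.
Import Order.TTheory GRing.Theory Num.Theory.
Local Open Scope ring_scope.

(* Each of the five terms of T shifts the index by a vector which either keeps
   rank and class (recombination (1,1,-1) and null coalescence (-1,-1,1)) or
   lowers both ((-1,0,0), (0,-1,0), (0,0,-1)). *)

Definition idx_of_int (a b d : int) : option idx :=
  if [&& 0 <= a, 0 <= b, 0 <= d & ~~ [&& a == 0, b == 0 & d == 0]]
  then Some (absz a, absz b, absz d) else None.

Lemma idx_of_intP (a b d : int) (j : idx) : idx_of_int a b d = Some j ->
  [/\ j != (0, 0, 0)%N, a = j.1.1, b = j.1.2 & d = j.2].
Proof.
rewrite /idx_of_int; case: ifP => // /and4P[a_ge0 b_ge0 d_ge0 nz] [<-] /=.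
rewrite !gez0_abs //; split=> //.
by apply: contra nz => /eqP[/eqP a0 /eqP b0 /eqP d0]; rewrite -!absz_eq0 a0 b0 d0.
Qed.

Lemma xigetE (R : nzRingType) (xi : idx -> R) (a b d : int) :
  xiget xi a b d = if idx_of_int a b d is Some j then xi j else 0.
Proof. by rewrite /xiget /idx_of_int; case: ifP. Qed.

Section LinearCombinations.

Variable R : nzRingType.

Definition lincomb (s : seq (idx * R)) (xi : idx -> R) : R :=
  \sum_(p <- s) p.2 * xi p.1.

Definition entry (c : R) (a b d : int) : seq (idx * R) :=
  if idx_of_int a b d is Some j then [:: (j, c)] else [::].

Lemma lincomb_cat (s t : seq (idx * R)) (xi : idx -> R) :
  lincomb (s ++ t) xi = lincomb s xi + lincomb t xi.
Proof. exact: big_cat. Qed.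

Lemma lincomb_entry (c : R) (a b d : int) (xi : idx -> R) :
  lincomb (entry c a b d) xi = c * xiget xi a b d.
Proof.
rewrite /lincomb /entry xigetE.
by case: idx_of_int => [j|]; rewrite ?big_seq1 ?big_nil ?mulr0.
Qed.

Lemma all_entry (P : pred idx) (c : R) (a b d : int) :
  (forall j, idx_of_int a b d = Some j -> P j) ->
  all (fun p => P p.1) (entry c a b d).
Proof. by rewrite /entry; case: idx_of_int => [j /(_ j erefl) /= ->|]. Qed.

End LinearCombinations.

Definition Top_lincomb (R : fieldType) (rho : R) (i : idx) : seq (idx * R) :=
  let: (l, m, n) := i in
  let lz := (l : int) in let mz := (m : int) in let nz := (n : int) in
     entry (n%:R * rho / 2%:R) (lz + 1) (mz + 1) (nz - 1)
  ++ entry (l%:R * (l%:R - 1 + 2%:R * n%:R) / 2%:R) (lz - 1) mz nz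
  ++ entry (m%:R * (m%:R - 1 + 2%:R * n%:R) / 2%:R) lz (mz - 1) nz
  ++ entry (n%:R * (n%:R - 1) / 2%:R) lz mz (nz - 1)
  ++ entry (l%:R * m%:R) (lz - 1) (mz - 1) (nz + 1).

Lemma Top_lincombE (R : fieldType) (rho : R) (xi : idx -> R) (i : idx) :
  Top rho xi i = lincomb (Top_lincomb rho i) xi.
Proof.
case: i => [[l m] n].
by rewrite /Top /Top_lincomb !lincomb_cat !lincomb_entry !addrA.
Qed.

Definition dominated (i j : idx) : bool :=
  [&& j != (0, 0, 0)%N, (rank j <= rank i)%N & (cls j <= cls i)%N].

Lemma Top_lincomb_dominated (R : fieldType) (rho : R) (i : idx) :
  all (fun p => dominated i p.1) (Top_lincomb rho i).
Proof.
case: i => [[l m] n]; rewrite /Top_lincomb !all_cat.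
by apply/and5P; split; apply: all_entry => -[[x y] z]
  /idx_of_intP[nz /= ex ey ez]; rewrite /dominated nz /=; apply/andP; split; lia.
Qed.

Lemma rank_cls_recombination (l m n : nat) : (0 < n)%N ->
  rank (l.+1, m.+1, n.-1) = rank (l, m, n) /\
  cls (l.+1, m.+1, n.-1) = cls (l, m, n).
Proof. by move=> n_gt0 /=; split; lia. Qed.

Lemma rank_cls_coalescence (l m n : nat) : (0 < l)%N -> (0 < m)%N ->
  rank (l.-1, m.-1, n.+1) = rank (l, m, n) /\
  cls (l.-1, m.-1, n.+1) = cls (l, m, n).
Proof. by move=> l_gt0 m_gt0 /=; split; lia. Qed.

Theorem mainTheorem2 (R : realFieldType) (rho : R) (hrho : 0 < rho)
    (Rk K : nat) :
  (forall i : idx, i != (0, 0, 0)%N -> (rank i <= Rk)%N -> (cls i <= K)%N ->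
     exists s : seq (idx * R),
       all (fun p => [&& p.1 != (0, 0, 0)%N, (rank p.1 <= Rk)%N
                       & (cls p.1 <= K)%N]) s /\
       forall xi : idx -> R, Top rho xi i = \sum_(p <- s) p.2 * xi p.1)
  /\ (forall l m n : nat, (0 < n)%N ->
        rank (l.+1, m.+1, n.-1) = rank (l, m, n) /\
        cls (l.+1, m.+1, n.-1) = cls (l, m, n))
  /\ (forall l m n : nat, (0 < l)%N -> (0 < m)%N ->
        rank (l.-1, m.-1, n.+1) = rank (l, m, n) /\
        cls (l.-1, m.-1, n.+1) = cls (l, m, n)).
Proof.
split; last by split; [exact: rank_cls_recombination | exact: rank_cls_coalescence].
move=> i _ rank_i cls_i; exists (Top_lincomb rho i); split; last first.
  by move=> xi; rewrite Top_lincombE.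
apply: sub_all (Top_lincomb_dominated rho i) => -[j c] /and3P[-> rank_j cls_j] /=.
by rewrite (leq_trans rank_j) ?(leq_trans cls_j).
Qed.
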